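(* Let $g$ be self-neglecting and let $f\in\Gamma_\alpha(g)$. (i) If $g$ is ultimately decreasing and $\alpha<0$, then $f$ is tail equivalent (i.e. $f(t)/\tilde f(t)\to1$ as $t\to\infty$) to a function $\tilde f$ that is ultimately decreasing. (ii) If $g$ is ultimately increasing and $\alpha>0$, then $f$ is tail equivalent to a function that is ultimately increasing.
   Context: For $\alpha\in\mathbb{R}$ and a positive measurable function $g$, an ultimately positive measurable function $f:\mathbb{R}\to\mathbb{R}$ belongs to $\Gamma_\alpha(g)$ if $\lim_{t\to\infty} f(t+xg(t))/f(t)=e^{\alpha x}$ for all $x\in\mathbb{R}$. A measurable $g:\mathbb{R}\to(0,\infty)$ is self-neglecting if $g(t)/t\to0$ and $g(t+xg(t))/g(t)\to1$ locally uniformly in $x\in\mathbb{R}$ as $t\to\infty$. *)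

From HB Require Import structures.
From mathcomp Require Import all_boot all_order all_algebra.
From mathcomp Require Import all_classical all_reals all_analysis.
Set Implicit Arguments. Unset Strict Implicit. Unset Printing Implicit Defensive.
Import Order.TTheory GRing.Theory Num.Theory.
Import numFieldNormedType.Exports.
Local Open Scope classical_set_scope.
Local Open Scope ring_scope.

Definition ultimately {R : realType} (P : R -> Prop) : Prop :=
  exists M : R, forall t, M < t -> P t.

Definition ult_nonincreasing {R : realType} (h : R -> R) : Prop :=
  exists M : R, forall s t, M < s -> s <= t -> h t <= h s.

Definition ult_nondecreasing {R : realType} (h : R -> R) : Prop :=
  exists M : R, forall s t, M < s -> s <= t -> h s <= h t.

Definition self_neglecting {R : realType} (g : R -> R) : Prop :=
  measurable_fun [set: R] g /\
  (forall t, 0 < g t) /\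
  ((fun t => g t / t) @ +oo --> (0 : R)) /\
  (forall a b : R, forall eps : R, 0 < eps ->
     ultimately (fun t => forall x, a <= x <= b ->
        `| g (t + x * g t) / g t - 1 | < eps)).

Definition Gamma {R : realType} (alpha : R) (g : R -> R) (f : R -> R) : Prop :=
  measurable_fun [set: R] f /\
  ultimately (fun t => 0 < f t) /\
  (forall x : R, (fun t => f (t + x * g t) / f t) @ +oo --> expR (alpha * x)).

Definition tail_equiv {R : realType} (f h : R -> R) : Prop :=
  (fun t => f t / h t) @ +oo --> (1 : R).

(* Uniform convergence theorem: for f in Gamma_alpha(g) the ratios
   f(t + x g(t)) / (f(t) exp(alpha x)) tend to 1 uniformly in x in [0, 1].  Along
   t_n -> oo, Egorov's theorem makes them uniformly close to 1 for x outside small sets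
   of [1, 2] and [0, 4]; writing t_n + y g(t_n) = s_n + z g(s_n) with
   s_n = t_n + x g(t_n), for a y such that y and z avoid the exceptional sets,
   transfers this to every x.
   For alpha < 0 the uniform bound f(u + x g(u)) <= (1 + e) e^(alpha x) f(u) gives
   f(u + g(u)) <= f(u) and f <= (1 + e) f(u) on [u, u + g(u)]; chaining along the orbit
   u_(k+1) = u_k + g(u_k), which is unbounded because g is ultimately monotone, yields
   f(s) <= (1 + e) f(t) for all large t <= s.  Hence the tail supremum sup_(s >= t) f(s)
   is nonincreasing and tail equivalent to f.  Case (ii) is case (i) for 1/f, whose
   ratios are the inverses of those of f with alpha replaced by -alpha. *)

From HB Require Import structures.
From mathcomp Require Import all_boot all_order all_algebra.
From mathcomp Require Import all_classical all_reals all_analysis.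
From mathcomp Require Import measurable_realfun ring lra.
Import Order.TTheory GRing.Theory Num.Theory.
Import numFieldNormedType.Exports.
Local Open Scope classical_set_scope.
Local Open Scope ring_scope.

Lemma ultimately_cvgy {R : realType} {u : R^nat} {P : R -> Prop} :
  u @ \oo --> +oo -> ultimately P -> \forall n \near \oo, P (u n).
Proof.
move=> /cvgryPge uoo [M HM]; apply: filterS (uoo (M + 1)) => n Mn.
by apply: HM; lra.
Qed.

Section pointwise_almost_uniform_lt.
Context d (T : measurableType d) (R : realType) (mu : {measure set T -> \bar R}).

Lemma pointwise_almost_uniform_lt (f : (T -> R)^nat) (g : T -> R) (A : set T) (eps e : R) :
  (forall n, measurable_fun A (f n)) -> measurable A -> (mu A < +oo)%E ->
  (forall x, A x -> f ^~ x @ \oo --> g x) -> 0 < eps -> 0 < e ->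
  exists2 B, measurable B /\ (mu B < eps%:E)%E &
    \forall n \near \oo, forall x, A x -> ~ B x -> `|g x - f n x| < e.
Proof.
move=> mf mA Afin fg eps0 e0.
have [B [mB muB unif]] := pointwise_almost_uniform mf mA Afin fg eps0.
exists B => //.
have Bnbhs : nbhs (g : {uniform` A `\` B -> R})
    [set h | forall x, (A `\` B) x -> `|g x - h x| < e].
  apply/uniform_nbhs; exists [set p : R * R | ball p.1 e p.2]; split.
    by rewrite -entourage_ballE; exists e.
  by move=> h Bh x ABx; exact: Bh.
by have := unif _ Bnbhs; rewrite /fmap /=; apply: filterS => n Bn x Ax nBx; exact: Bn.
Qed.

End pointwise_almost_uniform_lt.

Section lebesgue_measure_facts.
Variable R : realType.
Local Notation mu := (@lebesgue_measure R).

Lemma measurable_fun_affine (b c : R) : measurable_fun [set: R] (fun y => b + c * y).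
Proof.
apply: continuous_measurable_fun => y.
by apply: continuousD; [exact: cvg_cst | apply: continuousM; [exact: cvg_cst | exact: cvg_id]].
Qed.

Section affine.
Variables (b c : R).
Hypothesis c0 : 0 < c.
Let aff (y : measurableTypeR R) : measurableTypeR R := b + c * y.
(* Needed in context for [pushforward mu aff] to be recognised as a measure. *)
Let maff : measurable_fun [set: measurableTypeR R] aff := measurable_fun_affine b c.

Let preimage_aff_itv (x z : R) :
  aff @^-1` `]x, z] = `](x - b) / c, (z - b) / c]%classic.
Proof.
apply/seteqP; split => y; rewrite /aff /= !in_itv /= ltr_pdivrMr // ler_pdivlMr //;
  move=> /andP[? ?]; apply/andP; split; lra.
Qed.

Lemma lebesgue_measure_affine_preimage (W : set R) : measurable W ->
  mu (aff @^-1` W) = ((c^-1)%:E * mu W)%E.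
Proof.
move=> mW.
have /= -> := @lebesgue_measure_unique R
  (mscale (NngNum (ltW c0)) (pushforward mu aff)) _ W mW.
- by rewrite /mscale /pushforward /= muleA -EFinM mulVf ?gt_eqF // mul1e.
- move=> _ /ocitvP[->|[[x z] /= _ ->]]; first by rewrite !measure0.
  transitivity (c%:E * mu [set` `](x - b) / c, (z - b) / c]%R])%E; last first.
    by congr (_ * _)%E; exact: (congr1 mu (esym (preimage_aff_itv x z))).
  rewrite !lebesgue_measure_itv /= !lte_fin ltr_pM2r ?invr_gt0 // ltrD2r.
  case: ltP => xz; rewrite -EFinM; congr (_%:E); last by rewrite mulr0.
  by field; rewrite gt_eqF.
Qed.

End affine.

Lemma lebesgue_itv_not_covered (a b : R) (U V : set R) : measurable U -> measurable V ->
  (mu U + mu V < (b - a)%:E)%E -> exists y, [/\ a <= y <= b, ~ U y & ~ V y].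
Proof.
move=> mU mV small; apply: contrapT => covered.
have sub : `[a, b]%classic `<=` U `|` V.
  move=> y; rewrite /= in_itv /= => yab; apply: contrapT => /not_orP[nU nV].
  by apply: covered; exists y.
have : ((b - a)%:E <= mu (U `|` V))%E.
  have le_cover : (mu `[a, b] <= mu (U `|` V))%E.
    by apply: le_measure; rewrite ?inE //; exact: measurableU.
  apply: le_trans le_cover; rewrite lebesgue_measure_itv /= lte_fin; case: ltP => // ba.
  by rewrite lee_fin; lra.
move=> /le_lt_trans/(_ (le_lt_trans (measureU2 mu mU mV) small)).
by rewrite ltxx.
Qed.

End lebesgue_measure_facts.

Section real_estimates.
Variable R : realType.

Lemma normr_expR_sub1_le (w : R) : `|w| <= 1/2 -> `|expR w - 1| <= 2 * `|w|.
Proof.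
move=> hw; have h1 := expR_ge1Dx w; have h2 := expR_ge1Dx (- w).
have hm : expR w * expR (- w) = 1 by rewrite expRxMexpNx_1.
have hp := expR_gt0 w.
have [w0|w0] := leP 0 w.
  move: hw; rewrite (ger0_norm w0) => w2; rewrite ler_norml; apply/andP; split; nra.
move: hw; rewrite (ltr0_norm w0) => w2; rewrite ler_norml; apply/andP; split; nra.
Qed.

Lemma near1_mul_div (A B E d : R) : 0 < d -> d <= 1/2 ->
  `|A - 1| < d -> `|B - 1| < d -> `|E - 1| < d -> `|A * E / B - 1| < 8 * d.
Proof.
move=> d0 d2; rewrite !ltr_norml => /andP[a1 a2] /andP[b1 b2] /andP[e1 e2].
have B0 : 0 < B by lra.
have -> : A * E / B - 1 = (A * E - B) / B by field; rewrite gt_eqF.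
rewrite ltr_pdivrMr // ltr_pdivlMr //; apply/andP; split; nra.
Qed.

End real_estimates.

Section gamma_ratio.
Context {R : realType} (f g : R -> R) (alpha : R).

Definition gamma_ratio (t x : R) : R := f (t + x * g t) / f t * expR (- (alpha * x)).

Definition gamma_ratio_unif : Prop := forall eps, 0 < eps ->
  ultimately (fun t => forall x, 0 <= x <= 1 -> `|gamma_ratio t x - 1| < eps).

Lemma gamma_ratioE (t x : R) : 0 < f t ->
  f (t + x * g t) = gamma_ratio t x * expR (alpha * x) * f t.
Proof.
by move=> ft0; rewrite /gamma_ratio expRN; field; rewrite !gt_eqF ?expR_gt0.
Qed.

Lemma measurable_gamma_ratio (t : R) : measurable_fun [set: R] f ->
  measurable_fun [set: R] (gamma_ratio t).
Proof.
move=> mf; apply: measurable_funM; first apply: measurable_funM => //.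
- rewrite (_ : (fun x => _) = f \o (fun x => t + g t * x)).
    by apply: measurableT_comp => //; exact: measurable_fun_affine.
  by apply/funext => x /=; rewrite mulrC.
- rewrite (_ : (fun x => _) = expR \o (fun x => 0 + - alpha * x)).
    by apply: measurableT_comp; [exact: measurable_expR | exact: measurable_fun_affine].
  by apply/funext => x /=; rewrite add0r mulNr.
Qed.

Lemma gamma_ratio_cvg (x : R) : Gamma alpha g f -> gamma_ratio^~ x @ +oo --> (1 : R).
Proof.
move=> [_ [_ fcvg]]; rewrite -(expRxMexpNx_1 (alpha * x)).
by apply: cvgM; [exact: fcvg | exact: cvg_cst].
Qed.

Lemma gamma_ratio_mul (t x y z : R) : 0 < f t -> 0 < f (t + x * g t) ->
  z * g (t + x * g t) = (y - x) * g t ->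
  gamma_ratio t x * gamma_ratio (t + x * g t) z =
  gamma_ratio t y * expR (alpha * (y - x - z)).
Proof.
move=> ft0 fs0 zq; rewrite /gamma_ratio.
have -> : t + x * g t + z * g (t + x * g t) = t + y * g t by rewrite zq; ring.
rewrite (_ : alpha * (y - x - z) = - (alpha * x) + - (alpha * z) + alpha * y); last by ring.
rewrite !expRD [expR (- (alpha * y))]expRN.
by field; rewrite !gt_eqF ?expR_gt0.
Qed.

(* With [q = g(s)/g(t)] and [z = (y - x)/q], [gamma_ratio_mul] expresses the ratio at
   [x] through the ratios at [y] and [z]; the exponential error term is small since
   [y - x - z = (y - x)(q - 1)/q]. *)
Lemma gamma_ratio_transport (t x y z d : R) : 0 < d -> d <= 1/8 ->
  0 < f t -> 0 < f (t + x * g t) -> 0 < g t -> 0 <= x <= 1 -> 1 <= y <= 2 ->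
  `|g (t + x * g t) / g t - 1| < d / (8 * (`|alpha| + 1)) ->
  z * g (t + x * g t) = (y - x) * g t ->
  `|1 - gamma_ratio t y| < d -> `|1 - gamma_ratio (t + x * g t) z| < d ->
  `|gamma_ratio t x - 1| < 8 * d.
Proof.
move=> d0 d8 ft0 fs0 gt0 /andP[x0 x1] /andP[y1 y2] hq zq hy hz.
set s := t + x * g t in fs0 hq zq hz *.
set e := d / (8 * (`|alpha| + 1)) in hq.
have ha := normr_ge0 alpha.
have e_d : e * (8 * (`|alpha| + 1)) = d by rewrite /e mulfVK // gt_eqF //; lra.
have e0 : 0 < e by rewrite /e divr_gt0 //; lra.
have e64 : e <= 1/64 by nra.
set q := g s / g t in hq.
have /andP[q1 q2] : 3/4 <= q <= 5/4 by move: hq; rewrite ltr_norml; lra.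
have zqy : z * q = y - x.
  by rewrite /q mulrA zq mulfK // gt_eqF.
have hD : `|alpha * (y - x - z)| <= 3 * d / 8.
  have : `|y - x - z| <= 3 * e.
    move: hq; rewrite ltr_norml => /andP[qa qb].
    by rewrite ler_norml; apply/andP; split; nra.
  move=> hD; rewrite normrM; apply: le_trans (ler_wpM2l ha hD) _; nra.
have hE : `|expR (alpha * (y - x - z)) - 1| < d.
  have /normr_expR_sub1_le : `|alpha * (y - x - z)| <= 1/2 by lra.
  lra.
have hzpos : 0 < gamma_ratio s z by move: hz; rewrite distrC ltr_norml; lra.
have -> : gamma_ratio t x =
    gamma_ratio t y * expR (alpha * (y - x - z)) / gamma_ratio s z.
  by rewrite -gamma_ratio_mul // mulfK // gt_eqF.
by apply: near1_mul_div; rewrite // 1?distrC //; lra.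
Qed.

(* The preimage of [B2] under [y |-> (y - x)/q] has measure [q * mu B2 < 1/4], so it
   cannot cover [[1, 2]] together with [B1]. *)
Lemma gamma_ratio_near1_off_small_sets (B1 B2 : set R) (t x d : R) :
  measurable B1 -> measurable B2 ->
  (@lebesgue_measure R B1 < (1 / 4)%:E)%E -> (@lebesgue_measure R B2 < (1 / 8)%:E)%E ->
  0 < d -> d <= 1 / 8 -> 0 < f t -> 0 < f (t + x * g t) -> 0 < g t -> 0 <= x <= 1 ->
  `|g (t + x * g t) / g t - 1| < d / (8 * (`|alpha| + 1)) ->
  (forall y, `[1, 2]%classic y -> ~ B1 y -> `|1 - gamma_ratio t y| < d) ->
  (forall z, `[0, 4]%classic z -> ~ B2 z -> `|1 - gamma_ratio (t + x * g t) z| < d) ->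
  `|gamma_ratio t x - 1| < 8 * d.
Proof.
move=> mB1 mB2 B1small B2small d0 d18 ft0 fs0 gt0 /andP[x0 x1] hq hB1 hB2.
have e64 : d / (8 * (`|alpha| + 1)) <= 1 / 64.
  rewrite ler_pdivrMr ?mulr_gt0 ?ltr_pwDr //; have := normr_ge0 alpha; nra.
set q := g (t + x * g t) / g t in hq.
have /andP[q1 q2] : 1 / 2 <= q <= 3 / 2 by move: hq; rewrite ltr_norml; lra.
have gs0 : 0 < g (t + x * g t) by move: q1; rewrite /q ler_pdivlMr //; lra.
pose V := (fun y => - x / q + q^-1 * y) @^-1` B2.
have mV : measurable V.
  by rewrite /V -[X in measurable X]setTI; apply: measurable_fun_affine.
have muV : (@lebesgue_measure R V < (1 / 4)%:E)%E.
  rewrite /V lebesgue_measure_affine_preimage ?invr_gt0 ?invrK //; last lra.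
  apply: (@lt_le_trans _ _ (q * (1 / 8))%:E); last by rewrite lee_fin; lra.
  by rewrite [(q * _)%:E]EFinM lte_pmul2l // lte_fin; lra.
have [y [/andP[y1 y2] nB1 nV]] : exists y, [/\ 1 <= y <= 2, ~ B1 y & ~ V y].
  apply: lebesgue_itv_not_covered => //; apply: lt_le_trans (lteD B1small muV) _.
  by rewrite lee_fin; lra.
pose z := - x / q + q^-1 * y.
have z04 : 0 <= z <= 4.
  have -> : z = (y - x) / q by rewrite /z; field; rewrite gt_eqF //; lra.
  by rewrite divr_ge0 ?ler_pdivrMr /=; lra.
apply: (@gamma_ratio_transport t x y z) => //.
- by rewrite x0 x1.
- by rewrite y1 y2.
- by rewrite /z /q; field; rewrite !gt_eqF //; lra.
- by apply: hB1; rewrite //= in_itv /= y1 y2.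
- exact: hB2.
Qed.

Lemma gamma_ratio_cvg_along (t x : R^nat) : self_neglecting g -> Gamma alpha g f ->
  t @ \oo --> +oo -> (forall n, 0 <= x n <= 1) ->
  (fun n => gamma_ratio (t n) (x n)) @ \oo --> (1 : R).
Proof.
move=> [_ [gpos [_ sng]]] Gf too x01; have [mf [fpos _]] := Gf.
pose s n := t n + x n * g (t n).
have soo : s @ \oo --> +oo.
  apply: ger_cvgy too; apply: nearW => n; rewrite /s lerDl.
  by case/andP: (x01 n) => x0 _; rewrite mulr_ge0 // ltW.
have ratio_cvg u : u @ \oo --> +oo ->
    forall z, (fun n => gamma_ratio (u n) z) @ \oo --> (1 : R).
  by move=> uoo z; apply: cvg_comp uoo (gamma_ratio_cvg z Gf).
apply/cvgrPdist_lt => eps eps0.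
pose d := Num.min (eps / 8) (1 / 8).
have d0 : 0 < d by rewrite lt_min; apply/andP; split; lra.
have d8 : 8 * d <= eps.
  have : d <= eps / 8 by rewrite /d ge_min lexx.
  lra.
have d18 : d <= 1 / 8 by rewrite /d ge_min lexx orbT.
have itv_fin (a b : R) : (@lebesgue_measure R `[a, b] < +oo)%E.
  by rewrite lebesgue_measure_itv; case: ifP => // _; exact: ltry.
have [] // := @pointwise_almost_uniform_lt _ _ R (@lebesgue_measure R)
  (fun n => gamma_ratio (t n)) (cst 1) `[1, 2] (1 / 4) d.
- by move=> n; apply: measurable_funTS; exact: measurable_gamma_ratio.
- exact: itv_fin.
- by move=> z _; exact: ratio_cvg.
move=> B1 [mB1 B1small] nearB1.
have [] // := @pointwise_almost_uniform_lt _ _ R (@lebesgue_measure R)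
  (fun n => gamma_ratio (s n)) (cst 1) `[0, 4] (1 / 8) d.
- by move=> n; apply: measurable_funTS; exact: measurable_gamma_ratio.
- exact: itv_fin.
- by move=> z _; exact: ratio_cvg.
move=> B2 [mB2 B2small] nearB2.
have e0 : 0 < d / (8 * (`|alpha| + 1)) by rewrite divr_gt0 // mulr_gt0 // ltr_pwDr.
have near_q := ultimately_cvgy too (sng 0 1 _ e0).
have near_ft := ultimately_cvgy too fpos.
have near_fs := ultimately_cvgy soo fpos.
near=> n; rewrite distrC; apply: lt_le_trans d8.
apply: (gamma_ratio_near1_off_small_sets _ _ _ _ _ mB1 mB2 B1small B2small d0 d18) => //.
- by near: n; exact: near_ft.
- by near: n; exact: near_fs.
- by near: n; apply: filterS near_q => m; apply.
- by near: n; exact: nearB1.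
- by near: n; exact: nearB2.
Unshelve. all: end_near. Qed.

Lemma gamma_ratio_unif_of_Gamma : self_neglecting g -> Gamma alpha g f -> gamma_ratio_unif.
Proof.
move=> sng Gf eps eps0; apply: contrapT => nunif.
have bad n : exists p : R * R,
    [/\ n%:R < p.1, 0 <= p.2 <= 1 & eps <= `|gamma_ratio p.1 p.2 - 1|].
  apply: contrapT => nbad; apply: nunif; exists n%:R => t nt x x01.
  by rewrite ltNge; apply/negP => ?; apply: nbad; exists (t, x).
have [p pbad] := choice bad.
have too : (fun n => (p n).1) @ \oo --> +oo.
  by apply: ger_cvgy cvgr_idn; apply: nearW => n; have [/ltW] := pbad n.
have x01 n : 0 <= (p n).2 <= 1 by have [] := pbad n.
have := gamma_ratio_cvg_along (fun n => (p n).1) (fun n => (p n).2) sng Gf too x01.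
move=> /cvgrPdist_lt/(_ eps eps0) [N _ /(_ N (leqnn N))].
by rewrite distrC ltNge; have [_ _ ->] := pbad N.
Qed.

End gamma_ratio.

Lemma gamma_ratio_inv (R : realType) (f g : R -> R) (alpha t x : R) :
  gamma_ratio (fun u => (f u)^-1) g (- alpha) t x = (gamma_ratio f g alpha t x)^-1.
Proof. by rewrite /gamma_ratio mulNr opprK !invfM expRN !invrK. Qed.

Lemma gamma_ratio_unif_inv {R : realType} {f g : R -> R} {alpha : R} :
  gamma_ratio_unif f g alpha -> gamma_ratio_unif (fun u => (f u)^-1) g (- alpha).
Proof.
move=> Uf eps eps0; have [M HM] := Uf (Num.min (eps / 2) (1 / 2)) ltac:(rewrite lt_min; lra).
exists M => t Mt x x01; rewrite gamma_ratio_inv.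
have := HM t Mt x x01; set r := gamma_ratio f g alpha t x.
rewrite lt_min => /andP[hr_eps hr_half].
have r_half : 1 / 2 <= r by move: hr_half; rewrite ltr_norml; lra.
have -> : r^-1 - 1 = (1 - r) / r by field; rewrite gt_eqF //; lra.
rewrite normrM normfV (gtr0_norm (lt_le_trans _ r_half)) ?ltr_pdivrMr; try lra.
by rewrite distrC; nra.
Qed.

Section shift_orbit.
Context {R : realType} (g : R -> R).
Hypothesis gpos : forall u, 0 < g u.

Local Notation shift := (fun u => u + g u).

Definition orbit_unbounded (t : R) : Prop := forall s, exists k, s <= iter k shift t.

Lemma le_iter_shift (t : R) (k : nat) : t <= iter k shift t.
Proof. by elim: k => [|k IH] //=; have := gpos (iter k shift t); lra. Qed.

Lemma seq_reaches (u : R^nat) (c s : R) : 0 < c ->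
  (forall k, u k < s -> u k + c <= u k.+1) -> exists k, s <= u k.
Proof.
move=> c0 step; apply: contrapT => nreach.
have below k : u k < s by rewrite ltNge; apply/negP => sk; apply: nreach; exists k.
have grow k : u 0%N + k%:R * c <= u k.
  elim: k => [|k IH]; first by rewrite mul0r addr0.
  by have := step k (below k); rewrite -natr1 mulrDl mul1r; lra.
pose N := Num.bound `|(s - u 0%N) / c|.
have : (s - u 0%N) / c < N%:R.
  by apply: le_lt_trans (ler_norm _) (archi_boundP (normr_ge0 _)).
rewrite ltr_pdivrMr // => sN.
by have := grow N; have := below N; lra.
Qed.

Lemma orbit_unbounded_nonincreasing : ult_nonincreasing g -> ultimately orbit_unbounded.
Proof.
move=> [M gdec]; exists M => t Mt s.
apply: (@seq_reaches (fun k => iter k shift t) (g s)) => // k ks /=.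
by have := gdec _ s (lt_le_trans Mt (le_iter_shift t k)) (ltW ks); lra.
Qed.

Lemma orbit_unbounded_nondecreasing : ult_nondecreasing g -> ultimately orbit_unbounded.
Proof.
move=> [M ginc]; exists M => t Mt s.
apply: (@seq_reaches (fun k => iter k shift t) (g t)) => // k _ /=.
by have := ginc _ _ Mt (le_iter_shift t k); lra.
Qed.

Lemma orbit_chain_le (h : R -> R) (t K : R) : 1 <= K -> 0 <= h t ->
  (forall u, t <= u -> forall x, 0 <= x <= 1 -> h (u + x * g u) <= K * h u) ->
  (forall u, t <= u -> h (u + g u) <= h u) ->
  orbit_unbounded t -> forall s, t <= s -> h s <= K * h t.
Proof.
move=> K1 ht0 step_le shift_le unb.
pose tau k := iter k shift t.
have chain k : h (tau k) <= h t /\ forall s, t <= s <= tau k -> h s <= K * h t.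
  elim: k => [|k [IH1 IH2]].
    split=> // s /andP[ts st]; have -> : s = t by apply/eqP; rewrite eq_le st ts.
    by rewrite ler_peMl.
  have tk := le_iter_shift t k; have gk := gpos (tau k).
  have tS : tau k.+1 = tau k + g (tau k) by [].
  split; first by rewrite tS; exact: le_trans (shift_le _ tk) IH1.
  move=> s /andP[ts sk1]; have [sk|ks] := leP s (tau k); first by apply: IH2; rewrite ts sk.
  pose x := (s - tau k) / g (tau k).
  have -> : s = tau k + x * g (tau k) by rewrite /x mulfVK ?gt_eqF //; ring.
  have x01 : 0 <= x <= 1.
    rewrite /x divr_ge0 ?subr_ge0 ?(ltW ks) ?(ltW gk) //= ler_pdivrMr // mul1r.
    by move: sk1; rewrite tS; lra.
  by apply: le_trans (step_le _ tk _ x01) _; apply: ler_wpM2l; lra.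
move=> s ts; have [k sk] := unb s.
by have [_] := chain k; apply; rewrite ts sk.
Qed.

End shift_orbit.

Section almost_nonincreasing.
Context {R : realType}.

Definition ult_almost_nonincreasing (h : R -> R) : Prop := forall e, 0 < e ->
  exists M, forall t s, M < t -> t <= s -> h s <= (1 + e) * h t.

Lemma almost_nonincreasing_of_gamma_ratio_unif {f g : R -> R} {alpha : R} :
  alpha < 0 -> (forall u, 0 < g u) -> ultimately (fun t => 0 < f t) ->
  gamma_ratio_unif f g alpha -> ultimately (orbit_unbounded g) ->
  ult_almost_nonincreasing f.
Proof.
move=> a0 gpos [M0 fpos] Uf [Mo unb] e e0.
pose a := expR alpha; have a1 : a < 1 by rewrite expR_lt1.
have apos : 0 < a := expR_gt0 alpha.
pose e1 := Num.min e (1 - a).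
have e10 : 0 < e1 by rewrite lt_min e0 /=; lra.
have e1e : e1 <= e by rewrite ge_min lexx.
have e1a : (1 + e1) * a <= 1.
  have : e1 <= 1 - a by rewrite ge_min lexx orbT.
  nra.
have [M1 HM1] := Uf e1 e10.
exists (Num.max M0 (Num.max M1 Mo)) => t s; rewrite !gt_max => /and3P[M0t M1t Mot] ts.
have fu u : t <= u -> 0 < f u by move=> tu; apply: fpos; lra.
have step_le u : t <= u -> forall x, 0 <= x <= 1 ->
    f (u + x * g u) <= (1 + e1) * expR (alpha * x) * f u.
  move=> tu x x01; rewrite (gamma_ratioE f g alpha u x (fu u tu)).
  apply: ler_wpM2r; first exact/ltW/fu.
  apply: ler_wpM2r; first exact/ltW/expR_gt0.
  by have := HM1 u (lt_le_trans M1t tu) x x01; rewrite ltr_norml; lra.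
apply: (@le_trans _ _ ((1 + e1) * f t)); last by apply: ler_wpM2r; [exact/ltW/fu | lra].
apply: (orbit_chain_le _ gpos) => //; first by lra.
- exact/ltW/fu.
- move=> u tu x /[dup] x01 /andP[x0 _]; apply: le_trans (step_le u tu x x01) _.
  rewrite -mulrA; apply: ler_wpM2l; first lra.
  by apply: ler_piMl; [exact/ltW/fu | rewrite expR_le1; nra].
- move=> u tu; have := step_le u tu 1; rewrite mul1r mulr1 -/a => /(_ ltac:(lra)).
  by move/le_trans; apply; rewrite ler_piMl ?(ltW (fu u tu)).
- exact: unb.
Qed.

(* The tail supremum [H t = sup_(s >= t) h s] is nonincreasing and, by almost
   non-increase, squeezed between [h] and [(1 + e) h]. *)
Lemma almost_nonincreasing_tail_equiv {h : R -> R} : ultimately (fun t => 0 < h t) ->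
  ult_almost_nonincreasing h ->
  exists H, [/\ ult_nonincreasing H, tail_equiv h H & ultimately (fun t => 0 < H t)].
Proof.
move=> [M0 hpos] hdec.
pose tail t := [set h s | s in [set s | t <= s]].
have [M1 HM1] := hdec 1 ltr01; pose M := Num.max M0 M1.
have tail_n0 t : tail t !=set0.
  by exists (h t); exists t => /=.
have tail_sup t : M < t -> has_sup (tail t).
  rewrite gt_max => /andP[_ M1t]; split; first exact: tail_n0.
  by exists ((1 + 1) * h t) => _ [s ts <-]; exact: HM1.
have h_le_sup t : M < t -> h t <= sup (tail t).
  by move=> Mt; apply: (sup_upper_bound (tail_sup t Mt)); exists t => /=.
exists (fun t => sup (tail t)); split.
- exists M => s t Ms st; apply: ge_sup (tail_n0 t) _ => _ [r tr <-].
  by apply: (sup_upper_bound (tail_sup s Ms)); exists r => //=; exact: le_trans tr.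
- apply/cvgrPdist_lt => e e0; have [Me HMe] := hdec (e / 2) ltac:(lra).
  exists (Num.max M Me); split; first exact: num_real.
  move=> t; rewrite gt_max => /andP[Mt Met].
  have ht0 : 0 < h t by apply: hpos; move: Mt; rewrite gt_max => /andP[].
  have sup_le : sup (tail t) <= (1 + e / 2) * h t.
    by apply: ge_sup (tail_n0 t) _ => _ [s ts <-]; exact: HMe.
  have sup0 : 0 < sup (tail t) := lt_le_trans ht0 (h_le_sup t Mt).
  have hS := h_le_sup t Mt.
  have -> : 1 - h t / sup (tail t) = (sup (tail t) - h t) / sup (tail t).
    by field; rewrite gt_eqF.
  rewrite ger0_norm ?divr_ge0 ?subr_ge0 ?ltr_pdivrMr //; [nra | exact: ltW].
- exists M => t Mt; apply: lt_le_trans (h_le_sup t Mt).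
  by apply: hpos; move: Mt; rewrite gt_max => /andP[].
Qed.

Lemma tail_equivV {f h : R -> R} :
  tail_equiv f h -> tail_equiv (fun t => (f t)^-1) (fun t => (h t)^-1).
Proof.
move=> fh; rewrite /tail_equiv (_ : (fun t => _) = (fun t => (f t / h t)^-1)).
  by rewrite -[X in _ --> X]invr1; apply: cvgV; rewrite ?oner_eq0.
by apply/funext => t; rewrite invfM invrK.
Qed.

Lemma ult_nondecreasingV {H : R -> R} : ultimately (fun t => 0 < H t) ->
  ult_nonincreasing H -> ult_nondecreasing (fun t => (H t)^-1).
Proof.
move=> [M0 Hpos] [M1 Hdec]; exists (Num.max M0 M1) => s t; rewrite gt_max.
move=> /andP[M0s M1s] st; rewrite lef_pV2 ?posrE ?Hpos //; last exact: lt_le_trans st.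
exact: Hdec.
Qed.

End almost_nonincreasing.

Theorem mainTheorem8 (R : realType) (alpha : R) (g f : R -> R) :
  self_neglecting g -> Gamma alpha g f ->
  (ult_nonincreasing g -> alpha < 0 ->
     exists ft : R -> R, tail_equiv f ft /\ ult_nonincreasing ft) /\
  (ult_nondecreasing g -> 0 < alpha ->
     exists ft : R -> R, tail_equiv f ft /\ ult_nondecreasing ft).
Proof.
move=> sng Gf; have [_ [gpos _]] := sng; have [_ [fpos _]] := Gf.
have Uf := gamma_ratio_unif_of_Gamma _ _ _ sng Gf.
split=> [gdec a0 | ginc a0].
- have [H [Hdec fH _]] := almost_nonincreasing_tail_equiv fpos
    (almost_nonincreasing_of_gamma_ratio_unif a0 gpos fpos Uf
      (orbit_unbounded_nonincreasing _ gpos gdec)).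
  by exists H.
- have finv_pos : ultimately (fun t => 0 < (f t)^-1).
    by have [M HM] := fpos; exists M => t /HM; rewrite invr_gt0.
  have na0 : - alpha < 0 by rewrite oppr_lt0.
  have [H [Hdec finvH Hpos]] := almost_nonincreasing_tail_equiv finv_pos
    (almost_nonincreasing_of_gamma_ratio_unif na0 gpos finv_pos
      (gamma_ratio_unif_inv Uf) (orbit_unbounded_nondecreasing _ gpos ginc)).
  exists (fun t => (H t)^-1); split; last exact: ult_nondecreasingV.
  by move: (tail_equivV finvH); under eq_fun do rewrite invrK.
Qed.
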